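(* Let $\mu>0$, $\varepsilon>0$, and $z^0\in F$, and consider the iterates generated by Algorithm IP-FB$(z^0,\mu,\varepsilon)$ described in the context. Then: (i) at every iteration, the number of backtracking steps (reductions $\gamma_j\gets\beta\gamma_j$) is finite; (ii) at every iteration $j\geq1$, one has $z^j=\bar z^{j-1}$ and \[ q_\mu(z^j)=q_\mu(\bar z^{j-1})\leq q_\mu(z^{j-1})-\tfrac{1-\alpha}{2\gamma_{j-1}}\|\bar z^{j-1}-z^{j-1}\|^2, \] where $\gamma_{j-1}$ is the accepted stepsize of iteration $j-1$; (iii) every iterate $\bar z^j$ belongs to the sublevel set $\{z : q_\mu(z)\leq q_\mu(z^0)\}$, and $q_\mu(z^0)<\infty$.
   Context: Setting: $f:\mathbb{R}^n\to\mathbb{R}$ has locally Lipschitz continuous gradient; $g:\mathbb{R}^n\to\mathbb{R}\cup\{\infty\}$ is proper, lower semicontinuous, prox-bounded ($g+\frac{1}{2\gamma}\|\cdot\|^2$ bounded below for some $\gamma>0$; $\gamma_g\in(0,\infty]$ denotes the supremum of such $\gamma$), and continuous relative to $\operatorname{dom} g$ (whenever $\operatorname{dom} g\ni x^k\to x$, $g(x^k)\to g(x)$); $c:\mathbb{R}^n\to\mathbb{R}^m$ has locally Lipschitz continuous Jacobian. $q=f+g$, $\inf\{q(x): c(x)\le0\}\in\mathbb{R}$, $D=\{x: c(x)<0\}$, $F=\operatorname{dom} q\cap D\neq\emptyset$. The barrier $b:\mathbb{R}\to[0,\infty]$ has $\operatorname{dom} b=(-\infty,0)$, is twice continuously differentiable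 with $b'>0$ there, and $b(t)\to\infty$ as $t\to0^-$. For $\mu>0$: $f_\mu(z)=f(z)+\mu\sum_{i=1}^m b(c_i(z))$ ($=\infty$ outside $D$), $q_\mu=f_\mu+g$. $\operatorname{prox}_{\gamma g}(x)=\operatorname{argmin}_w\{g(w)+\frac{1}{2\gamma}\|w-x\|^2\}$, and $T_{\mu,\gamma}(z)=\operatorname{prox}_{\gamma g}(z-\gamma\nabla f_\mu(z))$ for $z\in D$. Algorithm IP-FB$(z^0,\mu,\varepsilon)$: inputs $z^0\in F$, $\mu>0$, $\varepsilon>0$; parameters $\gamma_0\in(0,\gamma_g)$, $\alpha,\beta\in(0,1)$. Set $j=0$ and start at step 2. Step 1 (only for $j\geq1$): set $\gamma_j\gets\gamma_{j-1}$ and $z^j\gets\bar z^{j-1}$. Step 2: compute some $\bar z^j\in T_{\mu,\gamma_j}(z^j)$. Step 3: if not all of the following hold: (a) $c(\bar z^j)<0$, (b) $q_\mu(\bar z^j)\leq q_\mu(z^j)-\frac{1-\alpha}{2\gamma_j}\|\bar z^j-z^j\|^2$, (c) $\|\nabla f_\mu(\bar z^j)-\nabla f_\mu(z^j)\|\leq\frac{\alpha}{\gamma_j}\|\bar z^j-z^j\|$, then set $\gamma_j\gets\beta\gamma_j$ and go back to Step 2. Step 4: if $\|\frac{1}{\gamma_j}(z^j-\bar z^j)-\nabla f_\mu(z^j)+\nabla f_\mu(\bar z^j)\|\leq\varepsilon$, return $\bar z^j$. Step 5: set $j\gets j+1$ and go to Step 1. *)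

From HB Require Import structures.
From mathcomp Require Import all_boot all_order all_algebra.
From mathcomp Require Import all_classical all_reals all_analysis.
Set Implicit Arguments. Unset Strict Implicit. Unset Printing Implicit Defensive.
Import Order.TTheory GRing.Theory Num.Theory.
Import numFieldNormedType.Exports.
Local Open Scope classical_set_scope.
Local Open Scope ring_scope.

Section IPFB.
Variables (R : realType) (n m : nat).
Local Notation V := 'rV[R]_n.

Definition enorm (v : V) : R := Num.sqrt (\sum_(i < n) (v 0 i) ^+ 2).

Definition grad (h : V -> R) (x : V) : V := \row_(i < n) ('D_(delta_mx 0 i) h x).

Definition locally_lipschitz (F : V -> V) : Prop :=
  forall x : V, exists r L : R, 0 < r /\
    forall y z : V, enorm (y - x) < r -> enorm (z - x) < r ->
      enorm (F y - F z) <= L * enorm (y - z).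

Definition smooth_LL (f : V -> R) : Prop :=
  (forall x : V, differentiable f x) /\ locally_lipschitz (grad f).

Definition strictly_feasible (c : 'I_m -> V -> R) (x : V) : Prop :=
  forall i, c i x < 0.

Definition q (f : V -> R) (g : V -> \bar R) (x : V) : \bar R := ((f x)%:E + g x)%E.

(* barrier-augmented smooth part, as a real function (only meaningful on D) *)
Definition fmuR (f : V -> R) (c : 'I_m -> V -> R) (b : R -> R) (mu : R) (z : V) : R :=
  f z + mu * \sum_(i < m) b (c i z).

Definition fmu (f : V -> R) (c : 'I_m -> V -> R) (b : R -> R) (mu : R) (z : V) : \bar R :=
  if `[< strictly_feasible c z >] then (fmuR f c b mu z)%:E else +oo%E.

Definition qmu f g c b mu (z : V) : \bar R := (fmu f c b mu z + g z)%E.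

Definition prox (g : V -> \bar R) (gam : R) (x : V) : set V :=
  [set w | forall w' : V,
     (g w + (1 / (2 * gam) * enorm (w - x) ^+ 2)%:E <=
      g w' + (1 / (2 * gam) * enorm (w' - x) ^+ 2)%:E)%E].

Definition Tmap f g c b mu (gam : R) (z : V) : set V :=
  prox g gam (z - gam *: grad (fmuR f c b mu) z).

Definition accept f g c b mu (alpha gam : R) (z zb : V) : Prop :=
  [/\ strictly_feasible c zb,
      (qmu f g c b mu zb <=
        qmu f g c b mu z - ((1 - alpha) / (2 * gam) * enorm (zb - z) ^+ 2)%:E)%E
    & enorm (grad (fmuR f c b mu) zb - grad (fmuR f c b mu) z)
        <= alpha / gam * enorm (zb - z)].

(* Steps 2-3 of one iteration (the backtracking loop), started with stepsize
   gam at the point z, terminating with accepted stepsize gam' and output zb. *)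
Inductive inner f g c b mu (alpha beta : R) : R -> V -> R -> V -> Prop :=
| inner_accept gam z zb :
    Tmap f g c b mu gam z zb -> accept f g c b mu alpha gam z zb ->
    inner f g c b mu alpha beta gam z gam zb
| inner_reject gam z zb' gam' zb :
    Tmap f g c b mu gam z zb' -> ~ accept f g c b mu alpha gam z zb' ->
    inner f g c b mu alpha beta (beta * gam) z gam' zb ->
    inner f g c b mu alpha beta gam z gam' zb.

Definition stop_test f c b mu (eps gam : R) (z zb : V) : Prop :=
  enorm (gam^-1 *: (z - zb) - grad (fmuR f c b mu) z + grad (fmuR f c b mu) zb) <= eps.

(* the stepsize with which iteration j starts: gamma_0 for j = 0, and the
   accepted stepsize gamma_{j-1} of iteration j-1 otherwise (Step 1) *)
Definition gstart (gamma0 : R) (gam : nat -> R) (j : nat) : R :=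
  if j is j'.+1 then gam j' else gamma0.

(* A run of IP-FB(z0, mu, eps) performing iterations 0, ..., N: z j, zb j and
   gam j are z^j, \bar z^j and the accepted gamma_j; iterations 0..N-1 did not
   stop at Step 4; z (N+1) := zb N is the starting point of the next
   iteration (if any). *)
Definition ipfb_run f g c b mu (eps alpha beta gamma0 : R) (z0 : V) (N : nat)
    (z zb : nat -> V) (gam : nat -> R) : Prop :=
  [/\ z 0%N = z0,
      (forall j, (j <= N)%N -> z j.+1 = zb j),
      (forall j, (j <= N)%N ->
         inner f g c b mu alpha beta (gstart gamma0 gam j) (z j) (gam j) (zb j))
    & (forall j, (j < N)%N -> ~ stop_test f c b mu eps (gam j) (z j) (zb j))].

End IPFB.

(* Near a strictly feasible point z with g z finite, the barrier terms b (c_i _) are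
   C^{1,1}, so the gradient of f_mu is calm with some constant L on a ball B(z, r) that
   stays strictly feasible, and there f_mu lies below its linearisation at z plus
   L |y - z|^2.  Comparing the prox objective at w in T_{mu,ga}(z) with its value at z
   and using the prox-boundedness of g gives |w - z|^2 = O(ga).  Hence for ga small
   enough w lies in B(z, r), and once 2 L ga <= alpha the tests (a)-(c) hold; since
   gamma beta^k -> 0, backtracking stops.  Accepted steps decrease q_mu, so by induction
   every iterate is strictly feasible with q_mu below q_mu(z^0). *)

From Pilot Require Import Defs.
From HB Require Import structures.
From mathcomp Require Import all_boot all_order all_algebra.
From mathcomp Require Import all_classical all_reals all_analysis.
From mathcomp Require Import ring lra.
Import Order.TTheory GRing.Theory Num.Theory.
Import numFieldNormedType.Exports.
Local Open Scope classical_set_scope.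
Local Open Scope ring_scope.
Set Implicit Arguments. Unset Strict Implicit. Unset Printing Implicit Defensive.

Section Euclidean.
Variables (R : realType) (n : nat).
Local Notation V := 'rV[R]_n.
Implicit Types u v w : V.

Definition dot u v : R := \sum_(i < n) u 0 i * v 0 i.

Lemma dotC u v : dot u v = dot v u.
Proof. by apply: eq_bigr => i _; rewrite mulrC. Qed.

Lemma dotDl u v w : dot (u + v) w = dot u w + dot v w.
Proof. by rewrite /dot -big_split; apply: eq_bigr => i _; rewrite !mxE mulrDl. Qed.

Lemma dotZl a u w : dot (a *: u) w = a * dot u w.
Proof. by rewrite /dot mulr_sumr; apply: eq_bigr => i _; rewrite !mxE mulrA. Qed.

Lemma dotBl u v w : dot (u - v) w = dot u w - dot v w.
Proof. by rewrite dotDl -scaleN1r dotZl mulN1r. Qed.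

Lemma dotDr u v w : dot w (u + v) = dot w u + dot w v.
Proof. by rewrite dotC dotDl !(dotC w). Qed.

Lemma dotZr a u w : dot w (a *: u) = a * dot w u.
Proof. by rewrite dotC dotZl dotC. Qed.

Lemma dotBr u v w : dot w (u - v) = dot w u - dot w v.
Proof. by rewrite dotC dotBl !(dotC w). Qed.

Lemma dot_ge0 u : 0 <= dot u u.
Proof. by apply: sumr_ge0 => i _; rewrite -expr2 sqr_ge0. Qed.

Lemma dot_eq0 u : dot u u = 0 -> u = 0.
Proof.
move=> /eqP; rewrite psumr_eq0 => [/allP u0|i _]; last by rewrite -expr2 sqr_ge0.
apply/rowP => i; rewrite mxE; apply/eqP.
by rewrite -sqrf_eq0 expr2; exact: u0 (mem_index_enum _).
Qed.

Lemma enormE u : enorm u = Num.sqrt (dot u u).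
Proof. by rewrite /enorm /dot; congr Num.sqrt; apply: eq_bigr => i _; rewrite expr2. Qed.

Lemma enorm_ge0 u : 0 <= enorm u.
Proof. by rewrite enormE sqrtr_ge0. Qed.

Lemma enorm_sqr u : enorm u ^+ 2 = dot u u.
Proof. by rewrite enormE sqr_sqrtr // dot_ge0. Qed.

Lemma CauchySchwarz_dot u v : dot u v ^+ 2 <= dot u u * dot v v.
Proof.
have [v0|vv0] := eqVneq (dot v v) 0.
  have dot0 w : dot w 0 = 0 by rewrite /dot big1 // => i _; rewrite mxE mulr0.
  by rewrite (dot_eq0 v0) !dot0 expr0n mulr0.
have vv_gt0 : 0 < dot v v by rewrite lt_neqAle eq_sym vv0 dot_ge0.
(* expand [0 <= |u - t v|^2] at the minimising [t] *)
pose t := dot u v / dot v v.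
have := dot_ge0 (u - t *: v).
rewrite !dotBl !dotBr !dotZl !dotZr (dotC v u).
have -> : dot u u - t * dot u v - (t * dot u v - t * (t * dot v v)) =
          dot u u - dot u v ^+ 2 / dot v v by rewrite /t; field.
by rewrite subr_ge0 ler_pdivrMr.
Qed.

Lemma CauchySchwarz_enorm u v : `|dot u v| <= enorm u * enorm v.
Proof.
rewrite !enormE -sqrtrM ?dot_ge0 // -sqrtr_sqr ler_sqrt ?CauchySchwarz_dot //.
by rewrite mulr_ge0 ?dot_ge0.
Qed.

Lemma ler_dot_enorm u v : dot u v <= enorm u * enorm v.
Proof. exact: le_trans (ler_norm _) (CauchySchwarz_enorm u v). Qed.

Lemma enorm_sqrD u v :
  enorm (u + v) ^+ 2 = enorm u ^+ 2 + 2 * dot u v + enorm v ^+ 2.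
Proof. by rewrite !enorm_sqr dotDl !dotDr (dotC v u); ring. Qed.

Lemma enormD u v : enorm (u + v) <= enorm u + enorm v.
Proof.
rewrite -(ler_pXn2r (n := 2)) // ?nnegrE ?addr_ge0 ?enorm_ge0 //.
by rewrite enorm_sqrD sqrrD; have := ler_dot_enorm u v; lra.
Qed.

Lemma enormZ a u : enorm (a *: u) = `|a| * enorm u.
Proof.
rewrite !enormE dotZl dotZr mulrA sqrtrM ?mul_ge0 -?expr2 ?sqr_ge0 //.
by rewrite sqrtr_sqr.
Qed.

Lemma enorm0 : enorm (0 : V) = 0.
Proof. by rewrite -(scale0r 0) enormZ normr0 mul0r. Qed.

End Euclidean.
Arguments dot {R n}.

Section FirstOrder.
Variables (R : realType) (n : nat).
Local Notation V := 'rV[R]_n.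
Implicit Types d y z : V.

Definition calm (F : V -> V) z (r L : R) :=
  forall y, enorm (y - z) < r -> enorm (F y - F z) <= L * enorm (y - z).

Lemma calm_enorm_le (F : V -> V) z r L : 0 <= L -> calm F z r L ->
  forall y, enorm (y - z) < r -> enorm (F y) <= enorm (F z) + L * r.
Proof.
move=> L0 FL y yr; rewrite -(subrK (F z) (F y)) addrC.
apply: le_trans (enormD _ _) _; rewrite lerD2l.
by apply: le_trans (FL y yr) _; rewrite ler_wpM2l // ltW.
Qed.

Let line_quotient (h : V -> R) d z t :
  (fun s : R => s^-1 *: (((fun s : R => h (s *: d + z)) \o shift t) (s *: 1)
                         - h (t *: d + z))) =
  (fun s : R => s^-1 *: ((h \o shift (t *: d + z)) (s *: d) - h (t *: d + z))).
Proof. by apply/funext => s /=; rewrite [s *: 1]mulr1 scalerDl addrA. Qed.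

Lemma derivable_line (h : V -> R) d z t :
  derivable h (t *: d + z) d -> derivable (fun s : R => h (s *: d + z)) t 1.
Proof. by rewrite /derivable line_quotient. Qed.

Lemma derive_line (h : V -> R) d z t :
  'D_1 (fun s : R => h (s *: d + z)) t = 'D_d h (t *: d + z).
Proof. by rewrite /derive line_quotient. Qed.

Lemma derive_grad (h : V -> R) y d :
  differentiable h y -> 'D_d h y = dot (grad h y) d.
Proof.
move=> dh; rewrite deriveE // {1}(row_sum_delta d) linear_sum /dot.
by apply: eq_bigr => i _; rewrite linearZ /= mxE -deriveE // mulrC.
Qed.

(* mean value theorem on the segment [z, y], then Cauchy-Schwarz and calmness *)
Lemma first_order_remainder_le (h : V -> R) z r L : 0 <= L ->
  (forall y, enorm (y - z) < r -> differentiable h y) -> calm (grad h) z r L ->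
  forall y, enorm (y - z) < r ->
    `|h y - h z - dot (grad h z) (y - z)| <= L * enorm (y - z) ^+ 2.
Proof.
move=> L0 hd hL y yr; set d := y - z.
pose phi t := h (t *: d + z).
have seg_in t : 0 <= t <= 1 -> enorm ((t *: d + z) - z) < r.
  move=> /andP[t0 t1]; rewrite addrK enormZ ger0_norm //.
  by apply: le_lt_trans yr; rewrite -[X in _ <= X]mul1r ler_wpM2r ?enorm_ge0.
have phi_der t : 0 <= t <= 1 -> derivable phi t 1.
  by move=> t01; apply/derivable_line/diff_derivable/hd/seg_in.
have [t t01 phiE] :
    exists2 t, t \in `]0, 1[%R & phi 1 - phi 0 = 'D_1 phi t * (1 - 0).
  apply: MVT => //.
    by move=> x; rewrite in_itv /= => /andP[x0 x1]; apply/derivableP/phi_der; rewrite !ltW.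
  by apply: derivable_within_continuous => x; rewrite in_itv /= => /phi_der.
move: t01; rewrite in_itv /= => /andP[t0 t1].
have t01 : 0 <= t <= 1 by rewrite !ltW.
move: phiE; rewrite /phi scale1r scale0r add0r subr0 mulr1.
rewrite -[in h y](subrK z y) -/d => ->.
rewrite derive_line derive_grad; last exact/hd/seg_in.
rewrite -dotBl; apply: le_trans (CauchySchwarz_enorm _ _) _.
rewrite expr2 mulrA ler_wpM2r ?enorm_ge0 //; apply: le_trans (hL _ (seg_in _ t01)) _.
rewrite addrK enormZ (ger0_norm (ltW t0)) mulrA ler_wpM2r ?enorm_ge0 //.
by rewrite -[X in _ <= X]mulr1 ler_wpM2l // ltW.
Qed.

Lemma smooth_LL_calm (h : V -> R) z : smooth_LL h ->
  exists2 r : R, 0 < r & exists2 L : R, 0 <= L & calm (grad h) z r L.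
Proof.
move=> [_ hL]; have [r [L [r0 H]]] := hL z.
exists r => //; exists (Num.max L 0); first by rewrite le_max lexx orbT.
move=> y yr; apply: le_trans (H y z yr _) _; first by rewrite subrr enorm0.
by rewrite ler_wpM2r ?enorm_ge0 // le_max lexx.
Qed.

Lemma smooth_LL_local (h : V -> R) z : smooth_LL h ->
  exists2 r : R, 0 < r & exists2 L : R, 0 <= L &
    calm (grad h) z r L /\
    forall y, enorm (y - z) < r ->
      `|h y - h z| <= (enorm (grad h z) + L * r) * enorm (y - z).
Proof.
move=> sh; have [r r0 [L L0 hL]] := smooth_LL_calm z sh.
have rem := first_order_remainder_le L0 (fun y _ => sh.1 y) hL.
exists r => //; exists L => //; split => // y yr.
rewrite -[h y - h z](subrK (dot (grad h z) (y - z))) mulrDl [leRHS]addrC.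
apply: le_trans (ler_normD _ _) _; apply: lerD; last exact: CauchySchwarz_enorm.
apply: le_trans (rem y yr) _.
by rewrite expr2 mulrA ler_wpM2r ?enorm_ge0 // ler_wpM2l // ltW.
Qed.

End FirstOrder.

Section RealLipschitz.
Variable R : realType.
Implicit Types F : R -> R.

Lemma MVT_normr_le F a b M : a <= b ->
  (forall x, a <= x <= b -> derivable F x 1 /\ `|derive1 F x| <= M) ->
  `|F b - F a| <= M * (b - a).
Proof.
move=> ab FM.
have [x xab ->] : exists2 x, x \in `[a, b]%R & F b - F a = derive1 F x * (b - a).
  apply: MVT_segment => //.
    move=> x; rewrite in_itv /= => /andP[x1 x2]; rewrite derive1E.
    by apply/derivableP; apply: (proj1 (FM x _)); rewrite !ltW.
  by apply: derivable_within_continuous => x; rewrite in_itv /= => /FM [].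
move: xab; rewrite in_itv /= => /FM [_ dx].
by rewrite normrM (ger0_norm (x := b - a)) ?subr_ge0 // ler_wpM2r ?subr_ge0.
Qed.

(* by continuity [|F'| <= |F'(t0)| + 1] near [t0]; then apply the mean value theorem *)
Lemma derivable_calm F t0 d0 : 0 < d0 ->
  (forall t, `|t - t0| < d0 -> derivable F t 1) ->
  {for t0, continuous (derive1 F)} ->
  exists2 d : R, 0 < d <= d0 & exists2 K : R, 0 <= K &
    forall t, `|t - t0| < d -> `|F t - F t0| <= K * `|t - t0|.
Proof.
move=> d00 Fder Fc.
have Fnear := @cvgr_dist_lt _ _ _ _ _ (derive1 F) (derive1 F t0) Fc 1 ltr01.
have [d1 /= d10 Fd1] := iffLR (nbhs_normP _ _) (Fnear _).
pose d := Num.min d1 d0; pose K := `|derive1 F t0| + 1.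
have d0d : 0 < d <= d0 by rewrite lt_min d10 d00 ge_min lexx orbT.
exists d => //; exists K; first by rewrite addr_ge0.
have FK x y : `|x - t0| < d -> `|y - t0| < d -> x <= y -> `|F y - F x| <= K * (y - x).
  move=> hx hy xy; apply: MVT_normr_le => // w /andP[xw wy].
  have hw : `|w - t0| < d.
    by move: hx hy; rewrite !ltr_norml => /andP[? ?] /andP[? ?]; apply/andP; lra.
  move: hw; rewrite lt_min => /andP[hw1 hw0]; split; first exact: Fder.
  rewrite -[derive1 F w](subrK (derive1 F t0)) addrC.
  by apply: le_trans (ler_normD _ _) _; rewrite lerD2l distrC ltW // Fd1 //= distrC.
move=> t tt0; have t0d : `|t0 - t0| < d by rewrite subrr normr0; case/andP: d0d.
case: (leP t0 t) => tt.
  by rewrite (ger0_norm (x := t - t0)) ?subr_ge0 //; apply: FK.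
rewrite distrC (ltr0_norm (x := t - t0)) ?subr_lt0 // opprB.
by apply: FK => //; exact: ltW.
Qed.

End RealLipschitz.

Section Barrier.
Variables (R : realType) (n m : nat).
Local Notation V := 'rV[R]_n.
Implicit Types y z : V.
Variables (f : V -> R) (c : 'I_m -> V -> R) (b : R -> R) (mu : R).
Hypothesis f_smooth : smooth_LL f.
Hypothesis c_smooth : forall i, smooth_LL (c i).
Hypothesis b_C2 : forall t : R, t < 0 ->
  [/\ derivable b t 1, derivable (derive1 b) t 1
    & {for t, continuous (derive1 (derive1 b))}].

Let barrier_grad i y := derive1 b (c i y) *: grad (c i) y.

Lemma barrier_grad_calm i z : c i z < 0 ->
  exists2 r : R, 0 < r & exists2 K : R, 0 <= K & forall y, enorm (y - z) < r ->
    c i y < 0 /\ enorm (barrier_grad i y - barrier_grad i z) <= K * enorm (y - z).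
Proof.
move=> ciz.
have [rc rc0 [Lc Lc0 [ciL ci_lip]]] := smooth_LL_local z (c_smooth i).
have b'_der t : `|t - c i z| < - c i z -> derivable (derive1 b) t 1.
  by rewrite ltr_norml => /andP[_ ?]; have [] // := b_C2 (_ : t < 0); lra.
have [_ _ b''_cont] := b_C2 ciz.
have ciz' : 0 < - c i z by rewrite oppr_gt0.
have [d /andP[d0 dz] [Kb Kb0 b'L]] := derivable_calm ciz' b'_der b''_cont.
set Kc := enorm (grad (c i) z) + Lc * rc.
have Kc0 : 0 <= Kc by rewrite addr_ge0 ?enorm_ge0 // mulr_ge0 // ltW.
exists (Num.min rc (d / (Kc + 1))); first by rewrite lt_min rc0 divr_gt0 // ltr_wpDl.
exists (Kb * Kc * Kc + `|derive1 b (c i z)| * Lc).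
  by rewrite addr_ge0 // !mulr_ge0.
move=> y; rewrite lt_min => /andP[yrc yd]; set e := enorm (y - z).
have ci_dist : `|c i y - c i z| < d.
  apply: le_lt_trans (ci_lip y yrc) _; rewrite -/Kc -/e.
  apply: le_lt_trans (_ : Kc * e <= Kc * (d / (Kc + 1))) _.
    by rewrite ler_wpM2l // ltW.
  by rewrite mulrA ltr_pdivrMr ?ltr_wpDl // mulrC ltr_pM2l //; lra.
split; first by move: ci_dist; rewrite ltr_norml; lra.
have -> : barrier_grad i y - barrier_grad i z =
    (derive1 b (c i y) - derive1 b (c i z)) *: grad (c i) y +
    derive1 b (c i z) *: (grad (c i) y - grad (c i) z).
  by rewrite scalerBl scalerBr addrA subrK.
rewrite mulrDl.
apply: le_trans (enormD _ _) _; rewrite !enormZ; apply: lerD.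
  apply: le_trans (ler_pM (normr_ge0 _) (enorm_ge0 _) (b'L _ ci_dist)
                          (calm_enorm_le Lc0 ciL yrc)) _.
  rewrite -/Kc -!mulrA ler_wpM2l // mulrC ler_wpM2l //; exact: ci_lip.
by rewrite -mulrA ler_wpM2l //; exact: ciL.
Qed.

Lemma barrier_sum_calm (s : seq 'I_m) z : strictly_feasible c z ->
  exists2 r : R, 0 < r & exists2 K : R, 0 <= K & forall y, enorm (y - z) < r ->
    {in s, forall i, c i y < 0} /\
    enorm (\sum_(i <- s) (barrier_grad i y - barrier_grad i z)) <= K * enorm (y - z).
Proof.
move=> Fz; elim: s => [|i s [r r0 [K K0 IH]]].
  by exists 1 => //; exists 0 => // y _; rewrite big_nil enorm0 mul0r.
have [ri ri0 [Ki Ki0 Hi]] := barrier_grad_calm (Fz i).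
exists (Num.min r ri); first by rewrite lt_min r0 ri0.
exists (Ki + K); first by rewrite addr_ge0.
move=> y; rewrite lt_min => /andP[yr yri].
have [[IH1 IH2] [Hi1 Hi2]] := (IH y yr, Hi y yri).
split; first by move=> j; rewrite inE => /orP[/eqP ->|/IH1].
by rewrite big_cons mulrDl; apply: le_trans (enormD _ _) _; exact: lerD.
Qed.

Lemma fmuRE : fmuR f c b mu = f + mu *: \sum_(i < m) (b \o c i).
Proof. by apply/funext => y; rewrite /fmuR /= fct_sumE. Qed.

Lemma differentiable_barrier i y : c i y < 0 -> differentiable (b \o c i) y.
Proof.
move=> ciy; have [b_der _ _] := b_C2 ciy.
by apply: differentiable_comp; [exact: (c_smooth i).1 | exact/derivable1_diffP].
Qed.

Lemma derive_barrier i y v : c i y < 0 ->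
  'D_v (b \o c i) y = derive1 b (c i y) * 'D_v (c i) y.
Proof.
move=> ciy; have [b_der _ _] := b_C2 ciy.
have db : differentiable b (c i y) by exact/derivable1_diffP.
have dc : differentiable (c i) y by exact: (c_smooth i).1.
rewrite deriveE; last exact: differentiable_barrier.
by rewrite diff_comp //= diff1E // -deriveE // mulrC.
Qed.

Lemma differentiable_fmuR y : strictly_feasible c y ->
  differentiable (fmuR f c b mu) y.
Proof.
move=> Fy; rewrite fmuRE; apply: differentiableD; first exact: f_smooth.1.
by apply/differentiableZ/differentiable_sum => i; exact: differentiable_barrier.
Qed.

Lemma grad_fmuR y : strictly_feasible c y ->
  grad (fmuR f c b mu) y = grad f y + mu *: \sum_(i < m) barrier_grad i y.
Proof.
move=> Fy; apply/rowP => k; rewrite /grad !mxE fmuRE.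
have dS v : derivable (\sum_(i < m) (b \o c i)) y v.
  by apply/diff_derivable/differentiable_sum => i; exact: differentiable_barrier.
rewrite deriveD; [|exact/diff_derivable/f_smooth.1|exact: derivableZ].
rewrite deriveZ // derive_sum; last by move=> i; exact/diff_derivable/differentiable_barrier.
congr (_ + _ * _); rewrite summxE; apply: eq_bigr => i _.
by rewrite derive_barrier // !mxE.
Qed.

Lemma fmuR_local z : strictly_feasible c z ->
  exists2 r : R, 0 < r & exists2 L : R, 0 <= L &
   [/\ forall y, enorm (y - z) < r -> strictly_feasible c y,
       calm (grad (fmuR f c b mu)) z r L
     & forall y, enorm (y - z) < r -> fmuR f c b mu y <=
         fmuR f c b mu z + dot (grad (fmuR f c b mu) z) (y - z) + L * enorm (y - z) ^+ 2].
Proof.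
move=> Fz.
have [rf rf0 [Lf Lf0 fL]] := smooth_LL_calm z f_smooth.
have [rs rs0 [Ks Ks0 sumL]] := barrier_sum_calm (index_enum 'I_m) Fz.
pose r := Num.min rf rs; pose L := Lf + `|mu| * Ks.
have r0 : 0 < r by rewrite lt_min rf0 rs0.
have L0 : 0 <= L by rewrite addr_ge0 // mulr_ge0.
have feas y : enorm (y - z) < r -> strictly_feasible c y.
  by rewrite lt_min => /andP[_ /sumL [+ _]] i; apply; exact: mem_index_enum.
have fmuL : calm (grad (fmuR f c b mu)) z r L.
  move=> y yr; have Fy := feas y yr; move: yr; rewrite lt_min => /andP[yf ys].
  rewrite !grad_fmuR // opprD addrACA -scalerBr -sumrB.
  apply: le_trans (enormD _ _) _; rewrite enormZ mulrDl -mulrA.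
  by apply: lerD; [exact: fL | rewrite ler_wpM2l //; exact: (sumL y ys).2].
exists r => //; exists L => //; split => // y yr.
have := first_order_remainder_le L0 (fun y yr => differentiable_fmuR (feas y yr)) fmuL yr.
by move/(le_trans (ler_norm _)); lra.
Qed.

End Barrier.

(* [e ^+ 2 <= 4 ga K + 4 ga e N], and [4 ga e N <= e ^+ 2 / 2 + 8 ga ^+ 2 N ^+ 2] *)
Lemma sqr_le_of_quadratic_le (R : realFieldType) (ga e N K : R) :
  0 < ga <= 1 -> e ^+ 2 / (4 * ga) - e * N <= K ->
  e ^+ 2 <= ga * (8 * `|K| + 16 * N ^+ 2).
Proof.
move=> /andP[ga0 ga1]; set t := e ^+ 2 / (4 * ga) => eK.
have et : e ^+ 2 = 4 * ga * t by rewrite /t; field; rewrite gt_eqF.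
have e_le : e ^+ 2 <= 4 * ga * K + 4 * ga * (e * N).
  have ga40 : 0 <= 4 * ga by rewrite mulr_ge0 // ltW.
  by rewrite et -mulrDr ler_wpM2l // -lerBlDr.
have := sqr_ge0 (e - 4 * ga * N).
have : ga * K <= ga * `|K| by rewrite ler_wpM2l ?ler_norm // ltW.
have : ga * ga * N ^+ 2 <= ga * N ^+ 2.
  by rewrite -mulrA ler_wpM2l ?ler_piMl ?sqr_ge0 // ltW.
nra.
Qed.

Section ProxStep.
Variables (R : realType) (n : nat).
Local Notation V := 'rV[R]_n.
Implicit Types z w : V.
Variable g : V -> \bar R.
Hypothesis g_neq_ninfty : forall x, g x != -oo%E.

(* compare the prox objective at [w] with its value at [z] *)
Lemma prox_descent ga gz z G w : 0 < ga -> g z = gz%:E ->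
  prox g ga (z - ga *: G) w ->
  exists2 gw : R, g w = gw%:E & gw + enorm (w - z) ^+ 2 / (2 * ga) + dot (w - z) G <= gz.
Proof.
move=> ga0 gzE /(_ z).
have -> : w - (z - ga *: G) = (w - z) + ga *: G by rewrite opprB addrA addrAC.
have -> : z - (z - ga *: G) = ga *: G by rewrite opprB addrC subrK.
rewrite gzE.
case gwE: (g w) => [gw||] //; last by have := g_neq_ninfty w; rewrite gwE.
rewrite -EFinD lee_fin => wz; exists gw => //.
move: wz; rewrite enorm_sqrD dotZr !enormZ (ger0_norm (ltW ga0)).
have -> : forall e D N, 1 / (2 * ga) * (e ^+ 2 + 2 * (ga * D) + (ga * N) ^+ 2) =
    e ^+ 2 / (2 * ga) + D + 1 / (2 * ga) * (ga * N) ^+ 2.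
  by move=> e D N; field; rewrite gt_eqF.
lra.
Qed.

Variables (gp lb : R).
Hypothesis gp0 : 0 < gp.
Hypothesis g_lb : forall x, (lb%:E <= g x + (1 / (2 * gp) * enorm x ^+ 2)%:E)%E.

Lemma prox_dist_sqr_le ga gz z G w : 0 < ga -> 4 * ga <= gp -> ga <= 1 ->
  g z = gz%:E -> prox g ga (z - ga *: G) w ->
  enorm (w - z) ^+ 2 <=
    ga * (8 * `|gz - lb + enorm z ^+ 2 / gp| + 16 * enorm G ^+ 2).
Proof.
move=> ga0 ga_gp ga1 gzE /(prox_descent ga0 gzE) [gw gwE descent].
set e := enorm (w - z) in descent *; set N := enorm G.
apply: sqr_le_of_quadratic_le; first by rewrite ga0 ga1.
have lb_w : lb <= gw + 1 / (2 * gp) * enorm w ^+ 2.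
  by have := g_lb w; rewrite gwE -EFinD lee_fin.
have w_le : enorm w ^+ 2 <= 2 * e ^+ 2 + 2 * enorm z ^+ 2.
  rewrite -[w](subrK z) enorm_sqrD -/e; have := ler_dot_enorm (w - z) z; rewrite -/e.
  by have := sqr_ge0 (e - enorm z); rewrite sqrrB; lra.
have w_le' : 1 / (2 * gp) * enorm w ^+ 2 <= e ^+ 2 / gp + enorm z ^+ 2 / gp.
  rewrite (_ : _ + _ = 1 / (2 * gp) * (2 * e ^+ 2 + 2 * enorm z ^+ 2)).
    by rewrite ler_wpM2l // divr_ge0 // mulr_ge0 // ltW.
  by field; rewrite gt_eqF.
have e_gp : e ^+ 2 / gp <= e ^+ 2 / (4 * ga).
  by rewrite ler_pdivrMr // mulrAC ler_pdivlMr ?mulr_gt0 // ler_wpM2l ?sqr_ge0.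
have e_half : e ^+ 2 / (2 * ga) = 2 * (e ^+ 2 / (4 * ga)) by field; rewrite gt_eqF.
have := CauchySchwarz_enorm (w - z) G; rewrite -/e -/N ler_norml => /andP[DN _].
lra.
Qed.

End ProxStep.

Lemma exists_expr_le (R : realType) (beta eps : R) : 0 <= beta < 1 -> 0 < eps ->
  exists k : nat, beta ^+ k <= eps.
Proof.
move=> /andP[b0 b1] eps0.
have beta1 : `|beta| < 1 by rewrite ger0_norm.
have small := @cvgr0_norm_lt _ _ _ _ _ (fun k : nat => beta ^+ k) (cvg_expr beta1) eps eps0.
case: (small _) => k _ /(_ k (leqnn k)).
by rewrite /= ger0_norm ?exprn_ge0 // => /ltW; exists k.
Qed.

Lemma inner_accepted (R : realType) (n m : nat) (f : 'rV[R]_n -> R)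
    (g : 'rV[R]_n -> \bar R) (c : 'I_m -> 'rV[R]_n -> R) (b : R -> R)
    (mu alpha beta gs gam : R) z zb :
  0 < beta -> 0 < gs -> inner f g c b mu alpha beta gs z gam zb ->
  0 < gam /\ accept f g c b mu alpha gam z zb.
Proof.
move=> beta0 + H; elim: H => // ga {}z zb' ga' {}zb _ _ _ IH ga0.
exact/IH/mulr_gt0.
Qed.

Section Backtracking.
Variables (R : realType) (n m : nat).
Local Notation V := 'rV[R]_n.
Implicit Types y z w : V.
Variables (f : V -> R) (g : V -> \bar R) (c : 'I_m -> V -> R) (b : R -> R).
Variables (mu alpha beta : R).
Local Notation qmu := (qmu f g c b mu).
Hypothesis f_smooth : smooth_LL f.
Hypothesis c_smooth : forall i, smooth_LL (c i).
Hypothesis b_C2 : forall t : R, t < 0 ->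
  [/\ derivable b t 1, derivable (derive1 b) t 1
    & {for t, continuous (derive1 (derive1 b))}].
Hypothesis g_neq_ninfty : forall x, g x != -oo%E.
Variables (gp lb : R).
Hypothesis gp0 : 0 < gp.
Hypothesis g_lb : forall x, (lb%:E <= g x + (1 / (2 * gp) * enorm x ^+ 2)%:E)%E.
Hypothesis alpha01 : 0 < alpha < 1.
Hypothesis beta01 : 0 < beta < 1.

Lemma qmu_lt_pinfty y : strictly_feasible c y -> (q f g y < +oo)%E -> (qmu y < +oo)%E.
Proof. by rewrite /q /Defs.qmu /fmu => /asboolT ->; case: (g y) => // r _; rewrite ltry. Qed.

Lemma g_fin_of_qmu y : strictly_feasible c y -> (qmu y < +oo)%E -> g y = (fine (g y))%:E.
Proof.
rewrite /Defs.qmu /fmu => /asboolT ->.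
by case gyE: (g y) => // _; have := g_neq_ninfty y; rewrite gyE.
Qed.

Lemma accept_qmu_le gam z zb : 0 < gam ->
  accept f g c b mu alpha gam z zb -> (qmu zb <= qmu z)%E.
Proof.
move=> gam0 [_ decrease _]; apply: le_trans decrease _.
have [_ /ltW alpha1] := andP alpha01.
rewrite leeBlDr // leeDl // lee_fin mulr_ge0 ?sqr_ge0 // divr_ge0 ?subr_ge0 //.
by rewrite mulr_ge0 // ltW.
Qed.

Lemma accept_small_steps z : strictly_feasible c z -> (qmu z < +oo)%E ->
  exists2 gb : R, 0 < gb & forall ga, 0 < ga -> ga <= gb ->
    forall w, Tmap f g c b mu ga z w -> accept f g c b mu alpha ga z w.
Proof.
move=> Fz /(g_fin_of_qmu Fz); set gz := fine (g z) => gzE.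
have [r r0 [L L0 [feas fmuL descent]]] := fmuR_local mu f_smooth c_smooth b_C2 Fz.
set G := grad (fmuR f c b mu) z.
pose C := 8 * `|gz - lb + enorm z ^+ 2 / gp| + 16 * enorm G ^+ 2.
have C0 : 0 <= C by rewrite addr_ge0 // mulr_ge0 // sqr_ge0.
have [a0 a1] := andP alpha01.
exists (Num.min (Num.min (gp / 4) 1) (Num.min (r ^+ 2 / (C + 1)) (alpha / (2 * L + 1)))).
  by rewrite !lt_min !divr_gt0 ?exprn_gt0 ?ltr01 ?ltr_wpDl ?mulr_ge0.
move=> ga ga0; rewrite !le_min => /andP[/andP[ga_gp ga1] /andP[ga_r ga_alpha]] w Tw.
have [gw gwE wz] := prox_descent g_neq_ninfty ga0 gzE Tw.
set e := enorm (w - z) in wz *.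
have w_near : e < r.
  rewrite -(ltr_pXn2r (n := 2)) ?nnegrE ?enorm_ge0 ?ltW //.
  apply: le_lt_trans (prox_dist_sqr_le g_neq_ninfty gp0 g_lb ga0 _ ga1 gzE Tw) _.
    by rewrite mulrC -ler_pdivlMr.
  rewrite -/C; apply: lt_le_trans (_ : ga * (C + 1) <= _).
    by rewrite ltr_pM2l // ltrDl.
  by rewrite -ler_pdivlMr // ltr_wpDl.
have L_le : L <= alpha / (2 * ga).
  by move: ga_alpha; rewrite !ler_pdivlMr ?mulr_gt0 ?ltr_wpDl ?mulr_ge0 //; nra.
split; first exact: feas.
- rewrite /Defs.qmu /fmu (asboolT (feas w w_near)) (asboolT Fz) gwE gzE.
  rewrite -!EFinD lee_fin -/e.
  have := descent w w_near; rewrite -/G -/e dotC.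
  have : L * e ^+ 2 <= alpha / (2 * ga) * e ^+ 2 by rewrite ler_wpM2r ?sqr_ge0.
  have -> : (1 - alpha) / (2 * ga) * e ^+ 2 = e ^+ 2 / (2 * ga) - alpha / (2 * ga) * e ^+ 2.
    by field; rewrite gt_eqF.
  lra.
- apply: le_trans (fmuL w w_near) _; rewrite ler_wpM2r ?enorm_ge0 //.
  apply: le_trans L_le _; rewrite ler_pdivrMr ?mulr_gt0 // mulrAC ler_pdivlMr //.
  by rewrite ler_wpM2l ?ltW //; lra.
Qed.

Lemma backtracking_terminates z gs : strictly_feasible c z -> (qmu z < +oo)%E -> 0 < gs ->
  ~ (exists w : nat -> V, forall k : nat,
       Tmap f g c b mu (gs * beta ^+ k) z (w k) /\
       ~ accept f g c b mu alpha (gs * beta ^+ k) z (w k)).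
Proof.
move=> Fz qz gs0 [w reject]; have [b0 b1] := andP beta01.
have [gb gb0 accepted] := accept_small_steps Fz qz.
have beta01' : 0 <= beta < 1 by rewrite (ltW b0) b1.
have [k bk] := exists_expr_le beta01' (divr_gt0 gb0 gs0).
have [Tw []] := reject k; apply: accepted Tw; first by rewrite mulr_gt0 // exprn_gt0.
by rewrite mulrC -ler_pdivlMr.
Qed.

Lemma ipfb_run_invariant eps gamma0 z0 N (z zb : nat -> V) (gam : nat -> R) :
  strictly_feasible c z0 -> 0 < gamma0 ->
  ipfb_run f g c b mu eps alpha beta gamma0 z0 N z zb gam ->
  forall j, (j <= N.+1)%N ->
    [/\ strictly_feasible c (z j), (qmu (z j) <= qmu z0)%E & 0 < gstart gamma0 gam j].
Proof.
move=> Fz0 gamma00 [z00 zS inn _]; have [b0 _] := andP beta01.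
elim=> [_|j IH jN]; first by rewrite z00 lexx; split.
have jN' : (j <= N)%N by rewrite -ltnS.
have [_ qj gj] := IH (leqW jN').
have [gam0 acc] := inner_accepted b0 gj (inn j jN'); have [Fzb _ _] := acc.
by rewrite zS //; split => //; exact: le_trans (accept_qmu_le gam0 acc) qj.
Qed.

End Backtracking.

Unset Implicit Arguments.
Theorem lemma3p4 (R : realType) (n m : nat)
  (f : 'rV[R]_n -> R) (g : 'rV[R]_n -> \bar R) (c : 'I_m -> 'rV[R]_n -> R)
  (b : R -> R)
  (* standing assumptions on f, g, c *)
  (Hf : smooth_LL f)
  (Hg_proper : (forall x, g x != -oo%E) /\ (exists x, (g x < +oo)%E))
  (Hg_lsc : lower_semicontinuous g)
  (Hg_cont : forall (xk : nat -> 'rV[R]_n) (x : 'rV[R]_n),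
      (forall k, (g (xk k) < +oo)%E) -> xk @ \oo --> x ->
      g (xk k) @[k --> \oo] --> g x)
  (Hc : forall i, smooth_LL (c i))
  (Hinf : ereal_inf [set q f g x | x in [set x | forall i, c i x <= 0]] \is a fin_num)
  (HF : exists x, (q f g x < +oo)%E /\ strictly_feasible c x)
  (* barrier *)
  (Hb_nonneg : forall t : R, t < 0 -> 0 <= b t)
  (Hb_C2 : forall t : R, t < 0 ->
      [/\ derivable b t 1, derivable (derive1 b) t 1 & {for t, continuous (derive1 (derive1 b))}])
  (Hb_incr : forall t : R, t < 0 -> 0 < derive1 b t)
  (Hb_blowup : b t @[t --> 0^'-] --> +oo)
  (* algorithm inputs and parameters *)
  (mu eps alpha beta gamma0 : R) (z0 : 'rV[R]_n)
  (Hmu : 0 < mu) (Heps : 0 < eps)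
  (Hz0 : (q f g z0 < +oo)%E /\ strictly_feasible c z0)
  (Hgamma0 : 0 < gamma0 /\ exists gam' : R, gamma0 < gam' /\
      exists lb : R, forall x, (lb%:E <= g x + (1 / (2 * gam') * enorm x ^+ 2)%:E)%E)
  (Halpha : 0 < alpha < 1) (Hbeta : 0 < beta < 1) :
  forall (N : nat) (z zb : nat -> 'rV[R]_n) (gam : nat -> R),
    ipfb_run f g c b mu eps alpha beta gamma0 z0 N z zb gam ->
    [/\ (* (i) backtracking terminates: no infinite sequence of rejections *)
        (forall j, (j <= N.+1)%N ->
           ~ (exists w : nat -> 'rV[R]_n, forall k : nat,
                Tmap f g c b mu (gstart gamma0 gam j * beta ^+ k) (z j) (w k) /\
                ~ accept f g c b mu alpha (gstart gamma0 gam j * beta ^+ k) (z j) (w k))),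
        (* (ii) sufficient decrease *)
        (forall j, (1 <= j <= N.+1)%N ->
           [/\ z j = zb j.-1,
               qmu f g c b mu (z j) = qmu f g c b mu (zb j.-1)
             & (qmu f g c b mu (zb j.-1) <=
                 qmu f g c b mu (z j.-1)
                 - ((1 - alpha) / (2 * gam j.-1) * enorm (zb j.-1 - z j.-1) ^+ 2)%:E)%E])
      & (* (iii) iterates stay in the initial sublevel set, which is proper *)
        (forall j, (j <= N)%N -> (qmu f g c b mu (zb j) <= qmu f g c b mu z0)%E)
        /\ (qmu f g c b mu z0 < +oo)%E].
Proof.
move=> N z zb gam run; have [_ zS inn _] := run.
have [g_neq_ninfty _] := Hg_proper; have [qz0 Fz0] := Hz0; have [beta0 _] := andP Hbeta.
have [gamma00 [gp [gamma0_gp [lb g_lb]]]] := Hgamma0.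
have gp0 : 0 < gp := lt_trans gamma00 gamma0_gp.
have descent := ipfb_run_invariant Halpha Hbeta Fz0 gamma00 run.
have qmu_z0 := qmu_lt_pinfty b mu Fz0 qz0.
split.
- move=> j jN; have [Fj qj gj] := descent j jN.
  exact (backtracking_terminates Hf Hc Hb_C2 g_neq_ninfty gp0 g_lb Halpha Hbeta
    Fj (le_lt_trans qj qmu_z0) gj).
- move=> j /andP[j1 jN]; have jN' : (j.-1 <= N)%N by rewrite -ltnS prednK.
  have [_ _ gj] := descent j.-1 (leqW jN').
  have [_ [_ decrease _]] := inner_accepted beta0 gj (inn _ jN').
  have zj : z j = zb j.-1 by rewrite -zS // prednK.
  by rewrite zj; split.
- by split => // j jN; have [_] := descent j.+1 jN; rewrite zS.
Qed.
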